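(* Fix calibration values $E^1,\dots,E^n\in\mathbb{R}^d_+$ with $\hat\sigma_j>0$ for all $j$. For every $t\in\mathbb{R}^d_+$, \[ \hat\Phi^{\mathrm{gwc}}(t):=\max_{1\le j\le d}\ \sup_{z_j\ge 0}\frac{t_j-\hat\mu_j(z_j)}{\hat\sigma_j(z_j)} =\max_{1\le j\le d}\max\Big\{\frac{t_j-\hat\mu_j(0)}{\hat\sigma_j(0)},\ \frac{t_j-\hat\mu_j(z^*_j)}{\hat\sigma_j(z^*_j)},\ -\frac{1}{\sqrt{n+1}}\Big\}, \] where $z^*_j=\hat\mu_j-\frac{\hat\sigma_j^2}{t_j-\hat\mu_j}$ if $t_j\ne\hat\mu_j$ and $\hat\mu_j\ge \frac{\hat\sigma_j^2}{t_j-\hat\mu_j}$, and $z^*_j=0$ otherwise (including when $t_j=\hat\mu_j$).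
   Context: $n\ge2$, $d\ge1$ integers. Calibration statistics: $\hat\mu_j=\frac1n\sum_{i=1}^n E^i_j$ and $\hat\sigma_j=\sqrt{\frac1n\sum_{i=1}^n(E^i_j-\hat\mu_j)^2}$. For $z\ge0$ (a placeholder for the unknown test residual coordinate), $\hat\mu_j(z)=\frac{\sum_{i=1}^nE^i_j+z}{n+1}$ and $\hat\sigma_j(z)=\sqrt{\frac{\sum_{i=1}^n(E^i_j-\hat\mu_j(z))^2+(z-\hat\mu_j(z))^2}{n}}$. *)

From HB Require Import structures.
From mathcomp Require Import all_boot all_order all_algebra.
From mathcomp Require Import all_classical all_reals all_analysis.
Set Implicit Arguments. Unset Strict Implicit. Unset Printing Implicit Defensive.
Import Order.TTheory GRing.Theory Num.Theory.
Local Open Scope ring_scope.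
Local Open Scope classical_set_scope.

Section GWC.
Variables (R : realType) (n d : nat).
(* calibration residuals: E i j = E^i_j, i : 'I_n, j : 'I_d *)
Variable E : 'I_n -> 'I_d -> R.

Definition mu_hat (j : 'I_d) : R := (\sum_(i < n) E i j) / n%:R.

Definition sigma_hat (j : 'I_d) : R :=
  Num.sqrt ((\sum_(i < n) (E i j - mu_hat j) ^+ 2) / n%:R).

Definition mu_z (j : 'I_d) (z : R) : R := (\sum_(i < n) E i j + z) / n.+1%:R.

Definition sigma_z (j : 'I_d) (z : R) : R :=
  Num.sqrt ((\sum_(i < n) (E i j - mu_z j z) ^+ 2 + (z - mu_z j z) ^+ 2) / n%:R).

Definition zstar (t : 'I_d -> R) (j : 'I_d) : R :=
  if (t j != mu_hat j) && (sigma_hat j ^+ 2 / (t j - mu_hat j) <= mu_hat j)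
  then mu_hat j - sigma_hat j ^+ 2 / (t j - mu_hat j) else 0.

Definition Phi_gwc (t : 'I_d -> R) : \bar R :=
  \big[Order.max/-oo%E]_(j < d)
    ereal_sup [set ((t j - mu_z j z) / sigma_z j z)%:E | z in [set z : R | 0 <= z]].

Definition Phi_gwc_closed (t : 'I_d -> R) : \bar R :=
  \big[Order.max/-oo%E]_(j < d)
    (Num.max ((t j - mu_z j 0) / sigma_z j 0)
      (Num.max ((t j - mu_z j (zstar t j)) / sigma_z j (zstar t j))
               (- (Num.sqrt (n.+1%:R))^-1)))%:E.
End GWC.

From HB Require Import structures.
From mathcomp Require Import all_boot all_order all_algebra.
From mathcomp Require Import all_classical all_reals all_analysis.
From mathcomp Require Import ring lra.
Set Implicit Arguments. Unset Strict Implicit. Unset Printing Implicit Defensive.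
Import Order.TTheory GRing.Theory Num.Theory.
Local Open Scope ring_scope.

(* Writing x = z - mu_hat, a = t - mu_hat and k = n + 1, the score
   (t - mu(z)) / sigma(z) becomes (a - x/k) / sqrt (sigma_hat^2 + x^2/k).
   Its derivative has the sign of -(sigma_hat^2 + a x), and it tends to
   -1/sqrt k at +oo.  For a > 0 the score increases up to the critical point
   x = -sigma_hat^2/a and decreases afterwards, so the supremum over z >= 0 is
   attained at z^* (or at z = 0 when z^* would be negative).  For a = 0 it
   decreases throughout; for a < 0 it decreases from z = 0 and then increases
   towards -1/sqrt k without reaching it, which is why that limit enters the
   closed form. *)

Section SquareComparison.
Variable R : realFieldType.

Lemma le_of_sqr_le (x y : R) : 0 <= y -> x ^+ 2 <= y ^+ 2 -> x <= y.
Proof. by move=> y_ge0 xy; nra. Qed.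

Lemma ler_pdiv_of_sqr (p q d e : R) : 0 < d -> 0 < e -> 0 <= q ->
  p ^+ 2 * e ^+ 2 <= q ^+ 2 * d ^+ 2 -> p / d <= q / e.
Proof.
move=> d_gt0 e_gt0 q_ge0 pq.
rewrite ler_pdivrMr // mulrAC ler_pdivlMr //.
by apply: le_of_sqr_le; [exact: mulr_ge0 (ltW _) | rewrite !exprMn].
Qed.

End SquareComparison.

Section Score.
Variable R : realType.

Definition score (a s k x : R) : R :=
  (a - x / k) / Num.sqrt (s ^+ 2 + x ^+ 2 / k).

Section Shape.
Variables (a s k : R).
Hypotheses (s_gt0 : 0 < s) (k_gt0 : 0 < k).

Let num (x : R) : R := a - x / k.
Let den (x : R) : R := Num.sqrt (s ^+ 2 + x ^+ 2 / k).
Let limit : R := - (Num.sqrt k)^-1.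

Lemma score_den_sqr (x : R) : den x ^+ 2 = s ^+ 2 + x ^+ 2 / k.
Proof.
by rewrite sqr_sqrtr // addr_ge0 ?sqr_ge0 ?divr_ge0 ?sqr_ge0 ?ltW.
Qed.

Lemma score_den_gt0 (x : R) : 0 < den x.
Proof.
by rewrite sqrtr_gt0 ltr_wpDr ?exprn_gt0 ?divr_ge0 ?sqr_ge0 ?ltW.
Qed.

Lemma score_sqr_cross (u w : R) :
  num w ^+ 2 * den u ^+ 2 - num u ^+ 2 * den w ^+ 2 =
  (u - w) / k * (num w * (s ^+ 2 + a * u) + num u * (s ^+ 2 + a * w)).
Proof. by rewrite !score_den_sqr /num; field; rewrite lt0r_neq0. Qed.

Lemma score_nonincreasing (u w : R) : w <= u ->
  0 <= s ^+ 2 + a * w -> 0 <= s ^+ 2 + a * u -> score a s k u <= score a s k w.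
Proof.
move=> wu hw hu; rewrite /score -/(num u) -/(num w) -/(den u) -/(den w).
have numwu : num u <= num w.
  by rewrite /num lerD2l lerN2 ler_wpM2r // invr_ge0 ltW.
have uw_ge0 : 0 <= (u - w) / k by rewrite divr_ge0 ?subr_ge0 // ltW.
have cross := score_sqr_cross u w.
have [nu_gt0|nu_le0] := ltrP 0 (num u).
  apply: ler_pdiv_of_sqr; rewrite ?score_den_gt0 //; first lra.
  suff : 0 <= (num w * (s ^+ 2 + a * u) + num u * (s ^+ 2 + a * w)).
    by move/(mulr_ge0 uw_ge0); lra.
  by rewrite addr_ge0 // mulr_ge0 //; lra.
have [nw_lt0|nw_ge0] := ltrP (num w) 0.
  rewrite -lerN2 -!mulNr; apply: ler_pdiv_of_sqr; rewrite ?score_den_gt0 //.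
    lra.
  rewrite !sqrrN; suff : (num w * (s ^+ 2 + a * u) + num u * (s ^+ 2 + a * w)) <= 0.
    by move/(mulr_ge0_le0 uw_ge0); lra.
  by rewrite -oppr_ge0 opprD addr_ge0 // -mulNr mulr_ge0 //; lra.
have den_inv_ge0 x : 0 <= (den x)^-1 by rewrite invr_ge0 ltW ?score_den_gt0.
exact: le_trans (mulr_le0_ge0 nu_le0 (den_inv_ge0 u)) (mulr_ge0 nw_ge0 (den_inv_ge0 w)).
Qed.

Lemma score_nondecreasing (u w : R) : 0 < a -> w <= u ->
  s ^+ 2 + a * u <= 0 -> score a s k w <= score a s k u.
Proof.
move=> a_gt0 wu hu; rewrite /score -/(num u) -/(num w) -/(den u) -/(den w).
have hw : s ^+ 2 + a * w <= 0 by have := ler_wpM2l (ltW a_gt0) wu; lra.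
have num_gt0 x : s ^+ 2 + a * x <= 0 -> 0 < num x.
  move=> hx; have x_lt0 : x < 0.
    by rewrite ltNge; apply/negP => /(mulr_ge0 (ltW a_gt0)); have := exprn_gt0 2 s_gt0; lra.
  have : x / k < 0 by rewrite pmulr_llt0 ?invr_gt0.
  by rewrite /num; lra.
have uw_ge0 : 0 <= (u - w) / k by rewrite divr_ge0 ?subr_ge0 // ltW.
have cross := score_sqr_cross u w.
apply: ler_pdiv_of_sqr; rewrite ?score_den_gt0 //; first exact: ltW (num_gt0 _ hu).
suff : (num w * (s ^+ 2 + a * u) + num u * (s ^+ 2 + a * w)) <= 0.
  by move/(mulr_ge0_le0 uw_ge0); lra.
by rewrite -oppr_ge0 opprD addr_ge0 // -mulrN mulr_ge0 ?oppr_ge0 // ltW ?num_gt0.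
Qed.

Lemma score_le_limit (x : R) : a <= 0 -> s ^+ 2 + a * x < 0 ->
  score a s k x <= limit.
Proof.
move=> a_le0 hx; rewrite /score -/(num x) -/(den x) /limit.
have r_gt0 : 0 < Num.sqrt k by rewrite sqrtr_gt0.
have r2 : Num.sqrt k ^+ 2 = k by rewrite sqr_sqrtr // ltW.
have ax_lt0 : a * x < 0 by have := sqr_ge0 s; lra.
have x_gt0 : 0 < x by rewrite ltNge; apply/negP => /(mulr_le0 a_le0); lra.
have num_lt0 : num x < 0 by rewrite /num subr_lt0; apply: le_lt_trans a_le0 _; exact: divr_gt0.
(* squaring, num x * sqrt k <= - den x reduces to a^2 k - 2 a x - s^2 >= 0 *)
have num_den : num x * Num.sqrt k <= - den x.
  rewrite -lerN2 opprK -mulNr; apply: le_of_sqr_le; first by rewrite mulr_ge0 ?ltW //; lra.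
  rewrite score_den_sqr exprMn sqrrN r2.
  have -> : num x ^+ 2 * k = a ^+ 2 * k - 2 * a * x + x ^+ 2 / k.
    by rewrite /num; field; rewrite lt0r_neq0.
  have : 0 <= a ^+ 2 * k by rewrite mulr_ge0 ?sqr_ge0 ?ltW.
  by nra.
by rewrite ler_pdivrMr ?score_den_gt0 // mulNr -mulrN ler_pdivlMl // mulrC.
Qed.

Lemma score_ge_asymptote (x : R) : 0 < x -> a <= x / k ->
  a * Num.sqrt k / x + limit <= score a s k x.
Proof.
move=> x_gt0 ax; rewrite /score -/(num x) -/(den x).
set r := Num.sqrt k.
have r_gt0 : 0 < r by rewrite sqrtr_gt0.
have r2 : r ^+ 2 = k by rewrite sqr_sqrtr // ltW.
have den_ge : x / r <= den x.
  apply: le_of_sqr_le; first exact: ltW (score_den_gt0 x).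
  by rewrite score_den_sqr expr_div_n r2 lerDr sqr_ge0.
have -> : a * r / x + limit = num x * (x / r)^-1.
  by rewrite /limit -/r /num -r2; field; rewrite !lt0r_neq0.
apply: ler_wnM2l; first by rewrite /num subr_le0.
by rewrite lef_pV2 ?posrE ?score_den_gt0 ?divr_gt0.
Qed.

Lemma score_gt_below_limit (b : R) : b < limit ->
  exists2 x, 0 < x & b < score a s k x.
Proof.
move=> b_lt; set r := Num.sqrt k.
have r_gt0 : 0 < r by rewrite sqrtr_gt0.
have limit_lt0 : limit < 0 by rewrite /limit oppr_lt0 invr_gt0.
have ar_ge0 : 0 <= `|a| * r := mulr_ge0 (normr_ge0 a) (ltW r_gt0).
pose x := (`|a| * r + 1) / (limit - b).
have x_gt0 : 0 < x by rewrite divr_gt0 ?subr_gt0 //; lra.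
exists x => //.
have [ax|ax] := lerP a (x / k); last first.
  have : 0 < score a s k x by rewrite divr_gt0 ?score_den_gt0 // subr_gt0.
  lra.
have := @score_ge_asymptote x x_gt0 ax.
have : - (`|a| * r) / x <= a * r / x.
  apply: ler_wpM2r; first by rewrite invr_ge0 ltW.
  rewrite -mulNr; apply: ler_wpM2r; first exact: ltW.
  by rewrite lerNl -normrN ler_norm.
have : `|a| * r / x < limit - b.
  by rewrite ltr_pdivrMr // /x [X in _ < X]mulrC divfK ?subr_eq0 ?gt_eqF //; lra.
by rewrite mulNr -/r; lra.
Qed.

Lemma score_le_critical (x : R) : 0 < a ->
  score a s k x <= score a s k (- (s ^+ 2 / a)).
Proof.
move=> a_gt0; have crit : s ^+ 2 + a * - (s ^+ 2 / a) = 0.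
  by field; rewrite gt_eqF.
have [cx|xc] := lerP (- (s ^+ 2 / a)) x.
  apply: score_nonincreasing; rewrite ?crit //.
  by have := ler_wpM2l (ltW a_gt0) cx; lra.
by apply: score_nondecreasing (ltW xc) _; rewrite ?crit.
Qed.

Lemma score_le_max_start_limit (w x : R) : a < 0 -> w <= 0 -> w <= x ->
  score a s k x <= Num.max (score a s k w) limit.
Proof.
move=> a_lt0 w_le0 wx.
have hw : 0 <= s ^+ 2 + a * w by rewrite addr_ge0 ?sqr_ge0 // mulr_le0 // ltW.
have [hx|hx] := lerP 0 (s ^+ 2 + a * x).
  by rewrite le_max score_nonincreasing.
by rewrite le_max score_le_limit ?orbT // ltW.
Qed.

Variable m : R.
Hypothesis m_ge0 : 0 <= m.

Definition zcrit : R :=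
  if (a != 0) && (s ^+ 2 / a <= m) then m - s ^+ 2 / a else 0.

Lemma zcrit_ge0 : 0 <= zcrit.
Proof. by rewrite /zcrit; case: ifP => // /andP[_]; rewrite subr_ge0. Qed.

Lemma score_le_closed_form (z : R) : 0 <= z ->
  score a s k (z - m) <=
  Num.max (score a s k (0 - m)) (Num.max (score a s k (zcrit - m)) limit).
Proof.
move=> z_ge0; have mz : 0 - m <= z - m by rewrite lerD2r.
rewrite /zcrit; case: (ltgtP a 0) => [a_lt0|a_gt0|a0] /=.
- have m_le0 : 0 - m <= 0 by rewrite sub0r oppr_le0.
  have := @score_le_max_start_limit _ _ a_lt0 m_le0 mz.
  by rewrite !le_max => /orP[->|->]; rewrite ?orbT.
- case: (lerP (s ^+ 2 / a) m) => hc /=.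
    have -> : m - s ^+ 2 / a - m = - (s ^+ 2 / a) by rewrite addrAC subrr add0r.
    by rewrite !le_max score_le_critical ?orbT.
  have h0 : 0 <= s ^+ 2 + a * (0 - m).
    by rewrite sub0r mulrN subr_ge0 mulrC -ler_pdivlMr // ltW.
  have := ler_wpM2l (ltW a_gt0) mz => amz.
  by rewrite le_max score_nonincreasing //; lra.
by rewrite le_max score_nonincreasing // a0 !mul0r !addr0 sqr_ge0.
Qed.

Lemma ereal_sup_score :
  ereal_sup [set (score a s k (z - m))%:E | z in [set z | 0 <= z]] =
  (Num.max (score a s k (0 - m)) (Num.max (score a s k (zcrit - m)) limit))%:E.
Proof.
set S := ereal_sup _.
have ub z : 0 <= z -> ((score a s k (z - m))%:E <= S)%E.
  by move=> z_ge0; apply: ereal_sup_ubound; exists z.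
apply/eqP; rewrite eq_le; apply/andP; split.
  by apply: ge_ereal_sup => _ [z z_ge0 <-]; rewrite lee_fin score_le_closed_form.
rewrite !EFin_max !ge_max ub ?ub ?zcrit_ge0 //=.
rewrite leNgt; apply/negP => S_lt; have S0 := ub 0 (lexx 0).
move: S_lt S0; case hS: S => [b| |] //= b_lt _.
have [z z_gt0 bz] := @score_gt_below_limit b (b_lt : b < limit).
have := ub (z + m) (addr_ge0 (ltW z_gt0) m_ge0).
by rewrite hS addrK lee_fin; lra.
Qed.

End Shape.
End Score.

Lemma sum_sqr_recenter (R : comRingType) (n : nat) (x : 'I_n -> R) (mu c : R) :
  \sum_(i < n) x i = mu *+ n ->
  \sum_(i < n) (x i - c) ^+ 2 = \sum_(i < n) (x i - mu) ^+ 2 + (mu - c) ^+ 2 *+ n.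
Proof.
move=> sum_x.
have split_sqr i : (x i - c) ^+ 2 =
    (x i - mu) ^+ 2 + (x i - mu) * (2 * (mu - c)) + (mu - c) ^+ 2 by ring.
rewrite (eq_bigr _ (fun i _ => split_sqr i)) !big_split /= -mulr_suml.
by rewrite sumrB sum_x !sumr_const !card_ord subrr mul0r addr0.
Qed.

Section Calibration.
Variables (R : realType) (n d : nat) (E : 'I_n -> 'I_d -> R).
Hypothesis n_gt0 : (0 < n)%N.

Let n_neq0 : n%:R != 0 :> R.
Proof. by rewrite pnatr_eq0 -lt0n. Qed.

Lemma sum_mu_hat (j : 'I_d) : \sum_(i < n) E i j = mu_hat E j *+ n.
Proof. by rewrite /mu_hat -[RHS]mulr_natr divfK. Qed.

Lemma mu_z_shift (j : 'I_d) (z : R) :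
  mu_z E j z = mu_hat E j + (z - mu_hat E j) / n.+1%:R.
Proof.
by rewrite /mu_z sum_mu_hat; field; rewrite nat1r pnatr_eq0.
Qed.

Lemma sigma_z_shift (j : 'I_d) (z : R) :
  sigma_z E j z =
  Num.sqrt (sigma_hat E j ^+ 2 + (z - mu_hat E j) ^+ 2 / n.+1%:R).
Proof.
rewrite /sigma_z /sigma_hat sqr_sqrtr; last first.
  by rewrite divr_ge0 ?ler0n ?sumr_ge0 // => i _; exact: sqr_ge0.
rewrite (sum_sqr_recenter _ (sum_mu_hat j)) mu_z_shift.
move: (mu_hat E j) (\sum_(i < n) _) => mu Q; congr Num.sqrt.
by field; rewrite nat1r pnatr_eq0 n_neq0.
Qed.

Lemma gwc_ratio_score (u : R) (j : 'I_d) (z : R) :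
  (u - mu_z E j z) / sigma_z E j z =
  score (u - mu_hat E j) (sigma_hat E j) n.+1%:R (z - mu_hat E j).
Proof. by rewrite mu_z_shift sigma_z_shift /score opprD addrA. Qed.

Lemma zstar_zcrit (t : 'I_d -> R) (j : 'I_d) :
  zstar E t j = zcrit (t j - mu_hat E j) (sigma_hat E j) (mu_hat E j).
Proof. by rewrite /zstar /zcrit subr_eq0. Qed.

End Calibration.

Theorem lemma3p3 (R : realType) (n d : nat) (hn : (2 <= n)%N) (hd : (1 <= d)%N)
  (E : 'I_n -> 'I_d -> R) (hE : forall i j, 0 <= E i j)
  (hsig : forall j, 0 < sigma_hat E j)
  (t : 'I_d -> R) (ht : forall j, 0 <= t j) :
  Phi_gwc E t = Phi_gwc_closed E t.
Proof.
have n_gt0 : (0 < n)%N by apply: leq_trans hn.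
rewrite /Phi_gwc /Phi_gwc_closed; apply: eq_bigr => j _.
have mu_ge0 : 0 <= mu_hat E j by rewrite divr_ge0 ?ler0n ?sumr_ge0 // => i _; exact: hE.
rewrite (eq_imagel (f' := fun z => (score (t j - mu_hat E j) (sigma_hat E j)
                                        n.+1%:R (z - mu_hat E j))%:E)); last first.
  by move=> z _; rewrite gwc_ratio_score.
by rewrite ereal_sup_score ?hsig ?ltr0Sn // zstar_zcrit !gwc_ratio_score.
Qed.
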